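(* Let $\mathcal{G}=(\mathcal{V},\mathcal{E})$ be an unweighted connected finite simple graph and let $u\in\mathcal{V}$ be dominated by some vertex $v\in\mathcal{V}$, $v\neq u$. Then for every $k\geq 1$, $$\widehat{PD}_k(\mathcal{G})=\widehat{PD}_k(\mathcal{G}-\{u\}).$$
   Context: $N(w)$ is the closed neighborhood of $w$ (the vertex together with its neighbors); $u$ is dominated by $v\ne u$ if $N(u)\subset N(v)$. $\mathcal{G}-\{u\}$ deletes $u$ and its incident edges. For $n\ge 1$, the $n$-th power $\mathcal{G}^{(n)}$ is the graph on $\mathcal{V}$ in which distinct vertices $x,y$ are adjacent iff their shortest-path distance $d(x,y)$ in $\mathcal{G}$ (each edge of length 1) is at most $n$. The power filtration is $K_0\subset K_1\subset K_2\subset\cdots\subset K_N$, where $K_0$ is the vertex set $\mathcal{V}$ (as a 0-dimensional complex), $K_n$ for $n\ge 1$ is the clique (flag) complex of $\mathcal{G}^{(n)}$, and $N$ is the diameter of $\mathcal{G}$. $\widehat{PD}_k(\mathcal{G})$ is the $k$-th persistence diagram (field coefficients) of this filtration. *)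

From HB Require Import structures.
From mathcomp Require Import all_boot all_order all_algebra.
Set Implicit Arguments. Unset Strict Implicit. Unset Printing Implicit Defensive.
Import GRing.Theory.
Local Open Scope ring_scope.

Section PowerFiltration.
Variable V : finType.
(* the graph: a symmetric irreflexive relation e on the finite vertex type V *)
Variable e : rel V.

(* within n x y <=> d(x,y) <= n (there is a path of length <= n from x to y) *)
Fixpoint within (n : nat) (x y : V) : bool :=
  if n is m.+1 then within m x y || [exists z, within m x z && e z y]
  else x == y.

Definition graph_connected : Prop := forall x y : V, exists n, within n x y.

Definition cnbhd (w : V) : {set V} := [set y | (y == w) || e w y].

Definition dominated (u v : V) : bool := cnbhd u \subset cnbhd v.

(* diameter: least n with d(x,y) <= n for all x, y (distances are < #|V|) *)
Definition diameter : nat :=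
  find (fun n => [forall x, forall y, within n x y]) (iota 0 #|V|.+1).

(* s is a k-simplex of K_n = clique complex of G^(n) (K_0 = vertex set) *)
Definition is_clique (n : nat) (s : {set V}) : bool :=
  [forall x in s, forall y in s, (x != y) ==> within n x y].
Definition simplex (n k : nat) (s : {set V}) : bool :=
  (#|s| == k.+1)%N && is_clique n s.

Variable F : fieldType.

(* chains: F-valued functions on finite subsets of V; simplices are oriented
   by the order of enum_rank *)
Definition chain := {ffun {set V} -> F^o}.

Definition elem_chain (s : {set V}) : chain := [ffun t : {set V} => ((t == s)%:R : F)].

Definition chain_sp (n k : nat) : {vspace chain} :=
  <<[seq elem_chain s | s <- enum [pred s | simplex n k s]]>>%VS.

Definition bsign (v : V) (t : {set V}) : F :=
  (-1) ^+ #|[set w in t | (enum_rank w < enum_rank v)%N]|.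

Definition bdry_fun (c : chain) : chain :=
  [ffun t : {set V} => \sum_(v : V | v \notin t) bsign v t * c (v |: t)].

Definition bdry : 'End(chain) := linfun bdry_fun.

Definition cycles (n k : nat) : {vspace chain} := (chain_sp n k :&: lker bdry)%VS.
Definition boundaries (n k : nat) : {vspace chain} := (bdry @: chain_sp n k.+1)%VS.

(* persistent Betti number: rank of H_k(K_i) -> H_k(K_j), i <= j *)
Definition pbetti (k i j : nat) : int :=
  (\dim (cycles i k))%:Z - (\dim (cycles i k :&: boundaries j k))%:Z.

Definition pb (k : nat) (i : option nat) (j : nat) : int :=
  if i is Some i' then pbetti k i' j else 0.

Definition prev (i : nat) : option nat := if i is i'.+1 then Some i' else None.

(* k-th persistence diagram of K_0 c ... c K_N (N = diameter), as the
   multiplicity of each point (birth b, death d), d = None meaning infinity *)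
Definition PD (k b : nat) (d : option nat) : int :=
  match d with
  | Some d =>
      if (b < d <= diameter)%N then
        pb k (Some b) d.-1 - pb k (Some b) d - pb k (prev b) d.-1 + pb k (prev b) d
      else 0
  | None =>
      if (b <= diameter)%N then pb k (Some b) diameter - pb k (prev b) diameter
      else 0
  end.

End PowerFiltration.

Definition del_vertex (V : finType) (e : rel V) (u : V) : rel {x : V | x != u} :=
  fun x y => e (val x) (val y).

From Pilot Require Import Defs.
From HB Require Import structures.
From mathcomp Require Import all_boot all_order all_algebra.
From mathcomp Require Import ring.
Set Implicit Arguments. Unset Strict Implicit. Unset Printing Implicit Defensive.
Import GRing.Theory.

(* For n >= 1, N(u) <= N(v) puts v within distance n of every vertex that u is
   within distance n of, so coning a simplex of K_n through u over v stays in
   K_n.  The resulting chain homotopy c |-> c - d h c - h d c sweeps every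
   k-cycle of K_i, within its homology class in K_i, off the simplices through
   u; dually a cycle of G - u that bounds in K_j of G bounds in K_j of G - u.
   As distances between the remaining vertices are unchanged, G and G - u have
   the same persistent Betti numbers in every degree k >= 1, and both
   filtrations are constant beyond the diameter of G - u, hence the diagrams
   agree. *)

Section Distance.
Variables (V : finType) (e : rel V).

Lemma withinS n x y : within e n x y -> within e n.+1 x y.
Proof. by move=> h /=; rewrite h. Qed.

Lemma within_le m n x y : m <= n -> within e m x y -> within e n x y.
Proof.
by move=> /subnKC <-; elim: (n - m) => [|p IH] h; rewrite ?addn0 ?addnS ?withinS ?IH.
Qed.

Lemma within_refl n x : within e n x x.
Proof. by apply: (@within_le 0) => //=. Qed.

Lemma within1 x y : e x y -> within e 1 x y.
Proof. by move=> h /=; apply/orP; right; apply/existsP; exists x; rewrite eqxx h. Qed.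

Lemma within_trans m n x z y : within e m x z -> within e n z y -> within e (m + n) x y.
Proof.
move=> hxz; elim: n y => [|n IH] y /=; first by move/eqP=> <-; rewrite addn0.
rewrite addnS /=; case/orP=> [h|/existsP[w /andP[h1 h2]]]; first by rewrite IH.
by apply/orP; right; apply/existsP; exists w; rewrite IH.
Qed.

Lemma within_sym : symmetric e -> forall n x y, within e n x y -> within e n y x.
Proof.
move=> sym_e; elim=> [|n IH] x y /=; first by rewrite eq_sym.
case/orP=> [h|/existsP[w /andP[h1 h2]]]; first by rewrite IH.
have hyw : within e 1 y w by rewrite within1 // sym_e.
by have := within_trans hyw (IH _ _ h1); rewrite add1n.
Qed.

Lemma within_connect n x y : within e n x y -> connect e x y.
Proof.
elim: n y => [|n IH] y /=; first by move/eqP->; exact: connect0.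
case/orP=> [/IH//|/existsP[w /andP[h1 h2]]].
exact: connect_trans (IH _ h1) (connect1 h2).
Qed.

Lemma path_within x p : path e x p -> within e (size p) x (last x p).
Proof.
elim: p x => [|z p IH] x /=; first by rewrite eqxx.
by case/andP=> h1 h2; have := within_trans (within1 h1) (IH _ h2); rewrite add1n.
Qed.

(* A shortest path is duplicate-free, hence has fewer than #|V| edges. *)
Lemma within_card n x y : within e n x y -> within e #|V|.-1 x y.
Proof.
move/within_connect/connectP=> [p pp ->].
case: (shortenP pp) => p' pp' up' _.
apply: within_le (path_within pp').
have := max_card (mem (x :: p')); rewrite (card_uniqP up') /=.
by case: #|V|.
Qed.

Definition within_all n := [forall x, forall y, within e n x y].

Lemma within_allP n : reflect (forall x y, within e n x y) (within_all n).
Proof.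
apply: (iffP forallP) => [H x y|H x]; first by have /forallP := H x; apply.
exact/forallP.
Qed.

Lemma within_all_card n : within_all n -> within_all #|V|.-1.
Proof. by move=> /within_allP H; apply/within_allP => x y; apply: within_card (H x y). Qed.

Lemma diameter_min n : within_all n -> diameter e <= n.
Proof.
move=> Hn; have Hm := within_all_card Hn.
have Hmin : within_all (minn n #|V|.-1) by case: leqP => _.
have mV : minn n #|V|.-1 < #|V|.+1 by rewrite ltnS (leq_trans (geq_minr _ _)) ?leq_pred.
apply: leq_trans (geq_minl n #|V|.-1); rewrite /diameter leqNgt; apply/negP => lt.
have := before_find 0 lt; rewrite nth_iota ?add0n //.
by move: Hmin; rewrite /within_all => ->.
Qed.

Lemma diameterP : graph_connected e -> within_all (diameter e).
Proof.
move=> conn; have Hm : within_all #|V|.-1.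
  by apply/within_allP => x y; have [n h] := conn x y; exact: within_card h.
have hs : has within_all (iota 0 #|V|.+1).
  by apply/hasP; exists #|V|.-1; rewrite // mem_iota add0n ltnS leq_pred.
have := nth_find 0 hs; rewrite nth_iota ?add0n //.
by move: hs; rewrite has_find size_iota.
Qed.

End Distance.

Local Open Scope ring_scope.

Lemma bdry_fun_is_linear (V : finType) (F : fieldType) : linear (@bdry_fun V F).
Proof.
move=> a c d; apply/ffunP => t; rewrite !ffunE scaler_sumr -big_split.
by apply: eq_bigr => w _ /=; rewrite !ffunE mulrDr mulrCA.
Qed.

HB.instance Definition _ (V : finType) (F : fieldType) :=
  GRing.isLinear.Build F (chain V F) (chain V F) _ (@bdry_fun V F)
    (@bdry_fun_is_linear V F).

Section Chains.
Variables (V : finType) (e : rel V) (F : fieldType).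
Local Notation chain := (chain V F).
Local Notation bdry := (bdry V F).

Lemma bdryE (c : chain) t : bdry c t = \sum_(w | w \notin t) bsign F w t * c (w |: t).
Proof. by rewrite lfunE ffunE. Qed.

Lemma chain_spP n k (c : chain) :
  reflect (forall s, c s != 0 -> simplex e n k s) (c \in chain_sp e F n k).
Proof.
set S := enum [pred s | simplex e n k s].
apply: (iffP idP) => [cS s|H].
  rewrite (coord_span cS) sum_ffunE; apply: contraR => ns; rewrite big1 // => i _.
  have iS : (i < size S)%N by rewrite /S -cardE.
  rewrite (nth_map set0) // !ffunE; case: eqP => [es|]; last by rewrite scaler0.
  by have := mem_nth set0 iS; rewrite mem_enum inE -es (negbTE ns).
have -> : c = \sum_(s : {set V}) c s *: elem_chain F s.
  apply/ffunP=> s; rewrite sum_ffunE (bigD1 s) //= big1 => [|t ts].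
    by rewrite !ffunE eqxx [c s *: _]mulr1 addr0.
  by rewrite !ffunE eq_sym (negbTE ts) scaler0.
apply: memv_suml => s _; have [->|cs] := eqVneq (c s) 0; first by rewrite scale0r mem0v.
by apply/memvZ/memv_span/map_f; rewrite mem_enum inE H.
Qed.

Lemma cliqueP n (s : {set V}) :
  reflect (forall x y, x \in s -> y \in s -> x != y -> within e n x y) (is_clique e n s).
Proof.
apply: (iffP forallP) => [H x y xs ys xy|H x].
  by have /implyP/(_ xs)/forallP/(_ y)/implyP/(_ ys)/implyP/(_ xy) := H x.
by apply/implyP=> xs; apply/forallP=> y; apply/implyP=> ys; apply/implyP; apply: H.
Qed.

Lemma bdry_chain_sp n k (c : chain) :
  c \in chain_sp e F n k.+1 -> bdry c \in chain_sp e F n k.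
Proof.
move/chain_spP=> H; apply/chain_spP => t; rewrite bdryE.
apply: contraNT => nt; rewrite big1 // => w wt.
have [->|/H/andP[/eqP]] := eqVneq (c (w |: t)) 0; first by rewrite mulr0.
rewrite cardsU1 wt add1n => -[tk] /cliqueP cl; case/negP: nt.
rewrite /simplex tk eqxx; apply/cliqueP => x y xt yt.
by apply: cl; rewrite in_setU1 ?xt ?yt orbT.
Qed.

Lemma chain_sp0 k (c : chain) : c \in chain_sp e F 0 k.+1 -> c = 0.
Proof.
move/chain_spP=> H; apply/ffunP => s; rewrite ffunE; apply/eqP/contraT => /H.
case/andP => /eqP sk /cliqueP cl; have : (1 < #|s|)%N by rewrite sk.
by case/card_gt1P => x [y [xs ys /[dup] xy]]; move: (cl _ _ xs ys xy) => /= ->.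
Qed.

Lemma chain_sp_le i j k : (i <= j)%N -> (chain_sp e F i k <= chain_sp e F j k)%VS.
Proof.
move=> ij; apply/subvP => c /chain_spP H; apply/chain_spP => s /H /andP[sk /cliqueP cl].
by rewrite /simplex sk; apply/cliqueP => x y xs ys xy; apply: within_le ij _; apply: cl.
Qed.

Lemma chain_sp_stable m n k : within_all e m -> (m <= n)%N ->
  chain_sp e F n k = chain_sp e F m k.
Proof.
move=> /within_allP Hm mn; rewrite /chain_sp; congr (<< _ >>%VS); congr map.
apply: eq_enum => s; rewrite !inE /simplex; congr (_ && _).
by apply/cliqueP/cliqueP => _ x y _ _ _; rewrite ?Hm // (within_le mn).
Qed.

End Chains.

Section BoundarySquare.
Variables (V : finType) (F : fieldType).
Local Notation bdry := (bdry V F).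

Definition rank_sign (x w : V) : F := if (enum_rank x < enum_rank w)%N then -1 else 1.

Lemma bsignU (w x : V) (t : {set V}) :
  x \notin t -> bsign F w (x |: t) = rank_sign x w * bsign F w t.
Proof.
move=> xt; rewrite /bsign /rank_sign.
set B := [set y in t | (enum_rank y < enum_rank w)%N]; case: ifP => xw.
  have -> : [set y in x |: t | (enum_rank y < enum_rank w)%N] = x |: B.
    by apply/setP => y; rewrite !inE; case: (eqVneq y x) => [->|//]; rewrite xw.
  by rewrite cardsU1 inE (negbTE xt) exprS.
have -> : [set y in x |: t | (enum_rank y < enum_rank w)%N] = B.
  by apply/setP => y; rewrite !inE; case: (eqVneq y x) => [->|//]; rewrite xw !andbF.
by rewrite mul1r.
Qed.

Lemma bsign_sqr (w : V) (t : {set V}) : bsign F w t * bsign F w t = 1.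
Proof. by rewrite -exprD -signr_odd addnn odd_double. Qed.

Lemma rank_sign_sqr (x w : V) : rank_sign x w * rank_sign x w = 1.
Proof. by rewrite /rank_sign; case: ifP; rewrite ?mulrNN mulr1. Qed.

Lemma rank_signC (x w : V) : x != w -> rank_sign x w = - rank_sign w x.
Proof.
rewrite -(inj_eq enum_rank_inj) neq_ltn /rank_sign => /orP[] h.
  by rewrite h ltnNge ltnW.
by rewrite h ltnNge ltnW // opprK.
Qed.

(* The diagonal hypothesis is needed: antisymmetry says nothing in characteristic 2. *)
Lemma sum_antisymmetric (R : zmodType) (I : finType) (g : I -> I -> R) :
  (forall w x, g w x = - g x w) -> (forall w, g w w = 0) ->
  \sum_w \sum_x g w x = 0.
Proof.
move=> gC g0; pose lt (x w : I) := (enum_rank x < enum_rank w)%N.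
have -> : \sum_w \sum_x g w x =
    \sum_w \sum_x (if lt x w then g w x else 0) +
    \sum_w \sum_x (if lt w x then g w x else 0).
  rewrite -big_split; apply: eq_bigr => w _; rewrite -big_split.
  apply: eq_bigr => x _ /=; case: (eqVneq x w) => [->|]; first by rewrite /lt ltnn g0 addr0.
  rewrite -(inj_eq enum_rank_inj) neq_ltn /lt => /orP[] h.
    by rewrite h ltnNge ltnW // addr0.
  by rewrite h ltnNge ltnW // add0r.
rewrite [X in _ + X]exchange_big -big_split big1 // => w _.
by rewrite -big_split big1 // => x _ /=; case: ifP; rewrite ?addr0 // gC addNr.
Qed.

Lemma bdry_bdry (c : chain V F) : bdry (bdry c) = 0.
Proof.
apply/ffunP=> t; rewrite ffunE bdryE.
pose g w x := if (w \notin t) && (x \notin w |: t) then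
  bsign F w t * (bsign F x (w |: t) * c (x |: (w |: t))) else 0.
transitivity (\sum_w \sum_x g w x).
  rewrite big_mkcond; apply: eq_bigr => w _ /=.
  case: ifP => wt; last by rewrite big1 // => x _; rewrite /g wt.
  rewrite bdryE mulr_sumr big_mkcond; apply: eq_bigr => x _.
  by rewrite /g wt /=; case: ifP.
apply: sum_antisymmetric => [w x|w]; last by rewrite /g setU11 andbF.
rewrite /g !in_setU1 !negb_or.
case: (eqVneq x w) => [->|xw]; first by rewrite /= andbF oppr0.
case wt: (w \in t); first by rewrite /= ?andbF oppr0.
case xt: (x \in t); first by rewrite /= ?andbF oppr0.
by rewrite /= !bsignU ?wt ?xt // setUCA (rank_signC xw); ring.
Qed.

End BoundarySquare.

Section DominatedVertex.
Variables (V : finType) (e : rel V) (F : fieldType) (u v : V).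
Hypotheses (sym_e : symmetric e) (vu : v != u) (dom : dominated e u v).
Local Notation chain := (chain V F).
Local Notation bdry := (bdry V F).

Lemma adj_dominated y : e u y -> (y == v) || e v y.
Proof.
move=> uy; have /(subsetP dom) : y \in cnbhd e u by rewrite inE uy orbT.
by rewrite inE.
Qed.

Lemma dominator_adj : e v u.
Proof.
have /(subsetP dom) : u \in cnbhd e u by rewrite inE eqxx.
by rewrite inE eq_sym (negbTE vu).
Qed.

Lemma within_dominator n y : within e n u y -> y != u -> within e n v y.
Proof.
elim: n y => [|n IH] y /=; first by move=> /eqP->; rewrite eqxx.
case/orP=> [h yu|/existsP[z /andP[h1 h2]] yu]; first by rewrite IH.
case: (eqVneq z u) => [zu|zu]; last first.
  by apply/orP; right; apply/existsP; exists z; rewrite IH.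
subst z; case/orP: (adj_dominated h2) => [/eqP->|vy]; first by rewrite within_refl.
by apply/orP; right; apply/existsP; exists v; rewrite within_refl vy.
Qed.

Lemma clique_setU1_dominator n (t : {set V}) : (0 < n)%N -> u \in t ->
  is_clique e n t -> is_clique e n (v |: t).
Proof.
move=> n0 ut /cliqueP cl.
have vt y : y \in t -> within e n v y.
  move=> yt; case: (eqVneq y v) => [->|yv]; first exact: within_refl.
  case: (eqVneq y u) => [->|yu]; first exact: within_le n0 (within1 dominator_adj).
  by apply: within_dominator => //; apply: cl; rewrite // eq_sym.
apply/cliqueP => x y; rewrite !in_setU1.
case/orP=> [/eqP->|xt]; case/orP=> [/eqP->|yt]; rewrite ?eqxx // => xy.
- exact: vt.
- by apply: (within_sym sym_e); apply: vt.
- exact: cl.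
Qed.

(* [cone c] is the cone with apex [v] over the part of [c] on simplices through
   [u]; [retract] is the chain homotopy it induces, whose values avoid [u]. *)
Definition cone (c : chain) : chain :=
  [ffun s : {set V} =>
     if (u \in s) && (v \in s) then bsign F v (s :\ v) * c (s :\ v) else 0].

Definition retract (c : chain) : chain := c - bdry (cone c) - cone (bdry c).

Lemma cone0 : cone 0 = 0.
Proof. by apply/ffunP=> s; rewrite !ffunE; case: ifP; rewrite ?mulr0. Qed.

Lemma cone_chain_sp n k (c : chain) : (0 < n)%N ->
  c \in chain_sp e F n k -> cone c \in chain_sp e F n k.+1.
Proof.
move=> n0 /chain_spP H; apply/chain_spP => s; rewrite ffunE.
case: ifP => [/andP[us vs]|]; last by rewrite eqxx.
rewrite mulf_eq0 negb_or => /andP[_ /H /andP[/eqP sk cl]].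
rewrite /simplex (cardsD1 v s) vs sk eqxx -(setD1K vs).
by apply: clique_setU1_dominator cl; rewrite // in_setD1 us eq_sym vu.
Qed.

Lemma cone_chain_sp_le i j k (c : chain) : (i <= j)%N ->
  c \in chain_sp e F i k.+1 -> cone c \in chain_sp e F j k.+2.
Proof.
case: i => [|i] ij cS; first by rewrite (chain_sp0 cS) cone0 mem0v.
exact: (subvP (chain_sp_le e F _ ij)) (cone_chain_sp _ cS).
Qed.

Lemma retract_chain_sp n k (c : chain) :
  c \in chain_sp e F n k.+1 -> retract c \in chain_sp e F n k.+1.
Proof.
case: n => [|n] cS.
  by rewrite (chain_sp0 cS) /retract !(cone0, linear0) ?subr0 ?oppr0 !addr0 mem0v.
rewrite /retract; apply: memvB; first apply: memvB => //.
  exact/bdry_chain_sp/cone_chain_sp.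
exact/cone_chain_sp/bdry_chain_sp.
Qed.

Lemma cone_bdry_notin (c : chain) (s : {set V}) : u \in s -> v \notin s ->
  bdry (cone c) s = c s.
Proof.
move=> us vs; rewrite bdryE (bigD1 v) //= big1 ?addr0.
  by rewrite ffunE setU11 in_setU1 us orbT setU1K // mulrA bsign_sqr mul1r.
move=> w /andP[ws wv]; rewrite ffunE !in_setU1 (negbTE vs) [v == w]eq_sym (negbTE wv).
by rewrite andbF mulr0.
Qed.

Lemma cone_bdry_in (c : chain) (s : {set V}) : u \in s -> v \in s ->
  bdry (cone c) s + cone (bdry c) s = c s.
Proof.
move=> us vs; set s' := s :\ v.
have sE : s = v |: s' by rewrite setD1K.
have vs' : v \notin s' by rewrite in_setD1 eqxx.
have us' : u \in s' by rewrite in_setD1 us eq_sym vu.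
rewrite [cone _ s]ffunE us vs /= -/s' [bdry c _]bdryE (bigD1 v) //= -sE.
rewrite mulrDr mulrA bsign_sqr mul1r addrCA -[RHS]addr0; congr (_ + _).
rewrite bdryE mulr_sumr (eq_bigl (fun w => (w \notin s') && (w != v))); last first.
  by move=> w; rewrite sE in_setU1 negb_or andbC.
rewrite -big_split /= big1 // => w /andP[ws' wv].
have wsE : w |: s = v |: (w |: s') by rewrite sE setUCA.
rewrite [cone _ (w |: s)]ffunE wsE !in_setU1 eqxx us' !orbT /=.
rewrite setU1K ?in_setU1 ?negb_or 1?eq_sym ?wv //.
rewrite sE (bsignU _ _ vs') (bsignU _ _ ws') (rank_signC F wv).
set a := rank_sign F v w; set b := bsign F w s'; set x := bsign F v s'.
transitivity (- (a * a) * (b * x * c (w |: s')) + x * (b * c (w |: s'))); first by ring.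
by rewrite rank_sign_sqr; ring.
Qed.

Lemma retract_vanish (c : chain) (s : {set V}) : u \in s -> retract c s = 0.
Proof.
move=> us.
have -> : retract c s = c s - (bdry (cone c) s + cone (bdry c) s).
  by rewrite !ffunE opprD addrA.
apply/eqP; rewrite subr_eq0 eq_sym; apply/eqP.
have [vs|vs] := boolP (v \in s); first by rewrite cone_bdry_in.
by rewrite cone_bdry_notin // ffunE (negbTE vs) andbF addr0.
Qed.

Lemma cone_vanish (c : chain) : (forall s : {set V}, u \in s -> c s = 0) -> cone c = 0.
Proof.
move=> H; apply/ffunP=> s; rewrite !ffunE; case: ifP => // /andP[us _].
by rewrite H ?mulr0 // in_setD1 us eq_sym vu.
Qed.

Lemma bdry_retract (c : chain) : bdry (retract c) = bdry c - bdry (cone (bdry c)).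
Proof. by rewrite /retract !linearB /= bdry_bdry subr0. Qed.

End DominatedVertex.

Lemma enum_rankE (T : finType) (x : T) : nat_of_ord (enum_rank x) = index x (enum T).
Proof.
have := nth_enum_rank x x; set i := enum_rank x => h.
by rewrite -[in RHS]h index_uniq ?enum_uniq // -cardE ltn_ord.
Qed.

Lemma index_filter_lt (T : eqType) (P : pred T) (s : seq T) x y : P x -> P y ->
  (index x (filter P s) < index y (filter P s))%N = (index x s < index y s)%N.
Proof.
move=> Px Py; elim: s => [|z s IH] //=; case Pz: (P z) => /=.
  by case: (z == x); case: (z == y) => //=; rewrite ltnS IH.
have [zx zy] : (z == x) = false /\ (z == y) = false.
  by split; apply: contraFF Pz => /eqP->.
by rewrite zx zy ltnS IH.
Qed.

Lemma enum_rank_sig_lt (T : finType) (P : pred T) (x y : {x : T | P x}) :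
  (enum_rank x < enum_rank y)%N = (enum_rank (val x) < enum_rank (val y))%N.
Proof.
have enumE : Finite.enum {x : T | P x} = pmap insub (Finite.enum T).
  by rewrite [in LHS]unlock.
rewrite !enum_rankE !enumT enumE -!(index_map val_inj).
rewrite (pmap_filter (@insubK _ _ _)) (eq_filter (isSome_insub _)).
exact: index_filter_lt (valP x) (valP y).
Qed.

Section DeleteDominated.
Variables (V : finType) (e : rel V) (F : fieldType) (u v : V).
Hypotheses (sym_e : symmetric e) (vu : v != u) (dom : dominated e u v).
Local Notation V' := {x : V | x != u}.
Local Notation e' := (@del_vertex V e u).
Local Notation chain := (chain V F).
Local Notation chain' := (Defs.chain V' F).

(* Folding [u] onto its dominator [v] maps walks of [G] to walks of [G - u]. *)
Definition fold_dominated (y : V) : V' := insubd (Sub v vu : V') y.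

Lemma val_fold_dominated y : val (fold_dominated y) = if y != u then y else v.
Proof. by rewrite val_insubd; case: ifP. Qed.

Lemma fold_dominatedK (x : V') : fold_dominated (val x) = x.
Proof. by apply/val_inj; rewrite val_fold_dominated (valP x). Qed.

Lemma fold_dominated_adj z y : e z y ->
  (fold_dominated z == fold_dominated y) || e' (fold_dominated z) (fold_dominated y).
Proof.
have fold_eq a b : val a = val b -> (a == b) || e' a b by move/val_inj->; rewrite eqxx.
have fold_adj a b : e (val a) (val b) -> (a == b) || e' a b.
  by move=> ab; rewrite /del_vertex ab orbT.
move=> ezy; case: (eqVneq z u) => [zu|zu]; case: (eqVneq y u) => [yu|yu].
- by rewrite zu yu eqxx.
- move: ezy; rewrite zu => /(adj_dominated dom)/orP[/eqP yv|vy].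
    by apply: fold_eq; rewrite !val_fold_dominated yv eqxx vu.
  by apply: fold_adj; rewrite !val_fold_dominated eqxx yu.
- move: ezy; rewrite yu sym_e => /(adj_dominated dom)/orP[/eqP zv|vz].
    by apply: fold_eq; rewrite !val_fold_dominated zv eqxx vu.
  by apply: fold_adj; rewrite !val_fold_dominated eqxx zu sym_e.
- by apply: fold_adj; rewrite !val_fold_dominated zu yu.
Qed.

Lemma within_del n (x y : V') : within e' n x y = within e n (val x) (val y).
Proof.
apply/idP/idP.
  elim: n y => [|n IH] y /=; first by move/eqP->.
  case/orP=> [/IH->//|/existsP[z /andP[h1 h2]]].
  by apply/orP; right; apply/existsP; exists (val z); rewrite IH.
rewrite -[y in within e' _ _ y]fold_dominatedK; move: (val y) => {}y.
elim: n y => [|n IH] y /=; first by move/eqP<-; rewrite fold_dominatedK.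
case/orP=> [/IH->//|/existsP[z /andP[h1 h2]]].
have := IH _ h1; case/orP: (fold_dominated_adj h2) => [/eqP<- ->//|zy hz].
by apply/orP; right; apply/existsP; exists (fold_dominated z); rewrite hz zy.
Qed.

Lemma del_connected : graph_connected e -> graph_connected e'.
Proof.
move=> conn x y; exists (diameter e); rewrite within_del.
by move/within_allP: (diameterP conn); apply.
Qed.

Lemma diameter_del : graph_connected e -> (diameter e' <= diameter e)%N.
Proof.
move=> conn; apply/diameter_min/within_allP => x y; rewrite within_del.
by move/within_allP: (diameterP conn); apply.
Qed.

Lemma simplex_del n k (t : {set V'}) : simplex e' n k t = simplex e n k (val @: t).
Proof.
rewrite /simplex (card_imset _ val_inj); congr (_ && _).
apply/cliqueP/cliqueP => cl.
  move=> _ _ /imsetP[x xt ->] /imsetP[y yt ->] xy.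
  by rewrite -within_del; apply: cl; rewrite // (contraNneq _ xy) // => ->.
move=> x y xt yt xy; rewrite within_del.
by apply: cl; rewrite ?(mem_imset _ _ val_inj) ?(inj_eq val_inj).
Qed.

Definition trace_del (s : {set V}) : {set V'} := val @^-1: s.

Lemma trace_del_imset (t : {set V'}) : trace_del (val @: t) = t.
Proof. by apply/setP => x; rewrite inE (mem_imset _ _ val_inj). Qed.

Lemma imset_trace_del (s : {set V}) : u \notin s -> val @: trace_del s = s.
Proof.
move=> us; apply/setP => y; apply/imsetP/idP => [[x]|ys]; first by rewrite inE => xs ->.
have yu : y != u by apply: contraNneq us => <-.
by exists (Sub y yu); rewrite ?inE.
Qed.

Lemma notin_imset_val (t : {set V'}) : u \notin val @: t.
Proof. by apply/imsetP => -[x _ /eqP]; rewrite eq_sym (negbTE (valP x)). Qed.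

Lemma bsign_del (w : V') (s : {set V}) : u \notin s ->
  bsign F w (trace_del s) = bsign F (val w) s.
Proof.
move=> us; rewrite /bsign; congr (_ ^+ _); rewrite -(card_imset _ val_inj).
apply: eq_card => y; rewrite inE; apply/imsetP/andP => [[x]|[ys yw]].
  by rewrite !inE enum_rank_sig_lt => /andP[xs xw] ->.
have yu : y != u by apply: contraNneq us => <-.
by exists (Sub y yu) => //; rewrite !inE enum_rank_sig_lt SubK ys.
Qed.

(* Chains of [G - u] are the chains of [G] vanishing on the simplices through [u]. *)
Definition extend (c : chain') : chain :=
  [ffun s : {set V} => if u \in s then 0 else c (trace_del s)].
Definition restrict (c : chain) : chain' := [ffun t : {set V'} => c (val @: t)].

Lemma extend_is_linear : linear extend.
Proof.
by move=> a c d; apply/ffunP => s; rewrite !ffunE; case: ifP; rewrite ?scaler0 ?addr0.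
Qed.

HB.instance Definition _ := GRing.isLinear.Build F chain' chain _ extend extend_is_linear.

Lemma extendK : cancel extend restrict.
Proof.
by move=> c; apply/ffunP => t; rewrite !ffunE (negbTE (notin_imset_val t)) trace_del_imset.
Qed.

Lemma extend_inj : injective extend.
Proof. exact: can_inj extendK. Qed.

Lemma extend_vanish c (s : {set V}) : u \in s -> extend c s = 0.
Proof. by rewrite ffunE => ->. Qed.

Lemma restrictK (c : chain) : (forall s : {set V}, u \in s -> c s = 0) ->
  extend (restrict c) = c.
Proof.
move=> H; apply/ffunP => s; rewrite !ffunE.
by case: ifP => us; [rewrite H | rewrite imset_trace_del ?us].
Qed.

Lemma extend_chain_sp n k c : c \in chain_sp e' F n k -> extend c \in chain_sp e F n k.
Proof.
move/chain_spP=> H; apply/chain_spP => s; rewrite ffunE.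
case: ifP => us; first by rewrite eqxx.
by move/H; rewrite simplex_del imset_trace_del ?us.
Qed.

Lemma restrict_chain_sp n k c : c \in chain_sp e F n k -> restrict c \in chain_sp e' F n k.
Proof. by move/chain_spP=> H; apply/chain_spP => t; rewrite ffunE simplex_del => /H. Qed.

Lemma extend_bdry c : extend (bdry V' F c) = bdry V F (extend c).
Proof.
apply/ffunP => s; rewrite [LHS]ffunE [RHS]bdryE; case: ifP => us.
  by rewrite big1 // => w _; rewrite extend_vanish ?mulr0 // in_setU1 us orbT.
rewrite bdryE (bigID (pred1 u)) /= [X in _ = X + _]big1 ?add0r; last first.
  by move=> w /andP[_ /eqP->]; rewrite extend_vanish ?mulr0 // setU11.
rewrite (reindex_omap (val : V' -> V) insub); last first.
  by move=> w /andP[_ wu]; rewrite insubT.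
apply: eq_big => [w|w ws]; first by rewrite inE (valP w) valK eqxx !andbT.
rewrite bsign_del ?us // ffunE in_setU1 us orbF eq_sym (negbTE (valP w)).
by congr (_ * c _); apply/setP => x; rewrite !inE (inj_eq val_inj).
Qed.

End DeleteDominated.

(* [Z = A Z' + (Z :&: B)] and [A Z' :&: B = A (Z' :&: B')], so both sides
   compute the dimension of the same quotient. *)
Lemma dimv_cap_transfer (K : fieldType) (X X' : vectType K) (A : 'Hom(X', X))
    (Z B : {vspace X}) (Z' B' : {vspace X'}) :
  lker A = 0%VS -> (A @: Z' <= Z)%VS -> (Z <= A @: Z' + (Z :&: B))%VS ->
  (forall z, z \in Z' -> (A z \in B) = (z \in B')) ->
  (\dim Z)%:Z - (\dim (Z :&: B))%:Z = (\dim Z')%:Z - (\dim (Z' :&: B'))%:Z :> int.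
Proof.
move=> kerA0 AZ'Z ZAZ' AB.
have ZE : Z = (A @: Z' + (Z :&: B))%VS.
  by apply/eqP; rewrite eqEsubv ZAZ' subv_add AZ'Z capvSl.
have capE : (A @: Z' :&: (Z :&: B))%VS = (A @: (Z' :&: B'))%VS.
  apply/eqP; rewrite eqEsubv; apply/andP; split; apply/subvP => x.
    case/memv_capP => /memv_imgP[z zZ ->] /memv_capP[_ zB].
    by apply: memv_img; rewrite memv_cap zZ -AB.
  case/memv_imgP => z /memv_capP[zZ zB] ->.
  by rewrite memv_cap memv_img //= memv_cap AB // zB (subvP AZ'Z) ?memv_img.
have dimA (U : {vspace X'}) : \dim (A @: U) = \dim U.
  by apply: limg_dim_eq; rewrite kerA0 capv0.
have := dimv_sum_cap (A @: Z') (Z :&: B); rewrite -ZE capE !dimA => h.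
by apply/eqP; rewrite subr_eq addrAC eq_sym subr_eq -!PoszD h addnC.
Qed.

Section PersistenceDeleted.
Variables (V : finType) (e : rel V) (F : fieldType) (u v : V).
Hypotheses (sym_e : symmetric e) (vu : v != u) (dom : dominated e u v).
Local Notation V' := {x : V | x != u}.
Local Notation e' := (@del_vertex V e u).
Local Notation chain := (Defs.chain V F).
Local Notation bdry := (bdry V F).
Local Notation retract := (retract u v).
Local Notation extend := (@extend V F u).
Local Notation restrict := (@restrict V F u).

Lemma extend_retract (c : chain) : extend (restrict (retract c)) = retract c.
Proof. by apply: restrictK => s; apply: (retract_vanish vu). Qed.

Lemma extend_cycles n k c : c \in cycles e' F n k -> extend c \in cycles e F n k.
Proof.
case/memv_capP => cS; rewrite !memv_ker => /eqP c0.
rewrite /cycles memv_cap (extend_chain_sp sym_e vu dom) // memv_ker.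
by rewrite -extend_bdry c0 raddf0 eqxx.
Qed.

Lemma restrict_retract_cycles n k (z : chain) : z \in cycles e F n k.+1 ->
  restrict (retract z) \in cycles e' F n k.+1.
Proof.
case/memv_capP => zS; rewrite memv_ker => /eqP z0.
rewrite /cycles memv_cap.
rewrite (restrict_chain_sp sym_e vu dom) ?(retract_chain_sp sym_e vu dom) // memv_ker.
apply/eqP/extend_inj.
by rewrite extend_bdry extend_retract bdry_retract z0 cone0 !raddf0 addr0.
Qed.

Lemma cycles_del_decompose i j k : (i <= j)%N ->
  (cycles e F i k.+1 <= linfun extend @: cycles e' F i k.+1
                          + (cycles e F i k.+1 :&: boundaries e F j k.+1))%VS.
Proof.
move=> ij; apply/subvP => z /[dup] zZ /memv_capP[zS]; rewrite memv_ker => /eqP z0.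
have zE : z = retract z + bdry (cone u v z) by rewrite /retract z0 cone0 subr0 subrK.
rewrite zE; apply: memv_add.
  by rewrite -extend_retract -[extend _]lfunE memv_img ?restrict_retract_cycles.
rewrite memv_cap memv_img ?(cone_chain_sp_le sym_e vu dom ij zS) // andbT.
rewrite (_ : bdry _ = z - retract z); last by apply/eqP; rewrite eq_sym subr_eq addrC -zE.
by rewrite memvB // -extend_retract extend_cycles ?restrict_retract_cycles.
Qed.

Lemma extend_boundaries j k c :
  (extend c \in boundaries e F j k) = (c \in boundaries e' F j k).
Proof.
apply/idP/idP => /memv_imgP[w wS wE]; last first.
  by rewrite wE extend_bdry memv_img ?(extend_chain_sp sym_e vu dom).
have cone_ext0 : cone u v (extend c) = 0.
  by apply: (cone_vanish vu) => s; apply: extend_vanish.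
have -> : c = Defs.bdry _ F (restrict (retract w)).
  apply: extend_inj; rewrite extend_bdry extend_retract bdry_retract -wE.
  by rewrite cone_ext0 linear0 subr0.
by rewrite memv_img ?(restrict_chain_sp sym_e vu dom) ?(retract_chain_sp sym_e vu dom).
Qed.

Lemma pbetti_del k i j : (0 < k)%N -> (i <= j)%N -> pbetti e F k i j = pbetti e' F k i j.
Proof.
case: k => // k _ ij; apply: (@dimv_cap_transfer _ _ _ (linfun extend)).
- by apply/eqP/lker0P => x y; rewrite !lfunE; apply: extend_inj.
- by apply/subvP => _ /memv_imgP[z zZ ->]; rewrite lfunE extend_cycles.
- exact: cycles_del_decompose.
- by move=> z _; rewrite lfunE extend_boundaries.
Qed.

End PersistenceDeleted.

Section Diagram.
Variable f : nat -> nat -> int.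

Definition prev_rank (b j : nat) : int := if b is b'.+1 then f b' j else 0.

Definition diagram (N b : nat) (d : option nat) : int :=
  match d with
  | Some d => if (b < d <= N)%N then
      f b d.-1 - f b d - prev_rank b d.-1 + prev_rank b d else 0
  | None => if (b <= N)%N then f b N - prev_rank b N else 0
  end.

Variable m : nat.
Hypotheses (f_col : forall i j, (m <= j)%N -> f i j = f i m)
  (f_row : forall i, (m <= i)%N -> f i m = f m m).

Lemma prev_rank_stable b j : (m <= j)%N -> prev_rank b j = prev_rank b m.
Proof. by case: b => //= b; apply: f_col. Qed.

Lemma diagram_stable N N' b d : (m <= N)%N -> (N <= N')%N ->
  diagram N b d = diagram N' b d.
Proof.
move=> mN NN'; case: d => [d|] /=.
  case: (leqP d N) => [dN|Nd]; first by rewrite (leq_trans dN NN') !andbT.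
  rewrite andbF; case: ifP => // /andP[bd _].
  have md1 : (m <= d.-1)%N.
    by rewrite -ltnS prednK ?(leq_ltn_trans mN Nd) // (leq_ltn_trans _ bd).
  have md : (m <= d)%N by rewrite (leq_trans md1) ?leq_pred.
  rewrite f_col // [f b d]f_col // prev_rank_stable // [prev_rank b d]prev_rank_stable //.
  by rewrite subrr sub0r addNr.
have mN' := leq_trans mN NN'.
case: (leqP b N) => [bN|Nb].
  rewrite (leq_trans bN NN') f_col // [f b N']f_col //.
  by rewrite prev_rank_stable // [prev_rank b N']prev_rank_stable.
case: ifP => // _; case: b Nb => // b Nb.
rewrite /prev_rank (f_col _ mN') (f_col _ mN') (f_row (leq_trans mN (ltnW Nb))).
by rewrite f_row ?subrr // (leq_trans mN).
Qed.

End Diagram.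

Lemma diagram_eq (f g : nat -> nat -> int) N b d :
  (forall i j, (i <= j)%N -> f i j = g i j) -> diagram f N b d = diagram g N b d.
Proof.
move=> fg; have prev_eq j : (b <= j)%N -> prev_rank f b j = prev_rank g b j.
  by case: b => //= b /ltnW; apply: fg.
case: d => [d|] /=; case: ifP => //; last by move=> bN; rewrite fg ?prev_eq.
move=> /andP[bd _].
have bd1 : (b <= d.-1)%N by rewrite -ltnS prednK // (leq_ltn_trans _ bd).
by rewrite !fg ?prev_eq // ltnW.
Qed.

Section PersistenceDiagram.
Variables (V : finType) (e : rel V) (F : fieldType) (k : nat).

Lemma PD_diagram b d : PD e F k b d = diagram (pbetti e F k) (diameter e) b d.
Proof. by case: d => [d|]; case: b. Qed.

Variable m : nat.
Hypothesis em : within_all e m.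

Lemma pbetti_col_stable i j : (m <= j)%N -> pbetti e F k i j = pbetti e F k i m.
Proof. by move=> mj; rewrite /pbetti /boundaries (chain_sp_stable F _ em mj). Qed.

Lemma pbetti_row_stable i : (m <= i)%N -> pbetti e F k i m = pbetti e F k m m.
Proof. by move=> mi; rewrite /pbetti /cycles (chain_sp_stable F _ em mi). Qed.

End PersistenceDiagram.

Unset Implicit Arguments.
Close Scope ring_scope.

Theorem theorem3 (F : fieldType) (V : finType) (e : rel V) (u v : V) :
  symmetric e -> irreflexive e -> graph_connected e ->
  v != u -> dominated e u v ->
  forall k : nat, (1 <= k)%N ->
  forall (b : nat) (d : option nat),
    PD e F k b d = PD (@del_vertex V e u) F k b d.
Proof.
move=> sym_e _ conn vu dom k k_gt0 b d.
have conn' := del_connected sym_e vu dom conn.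
rewrite !PD_diagram (diagram_eq _ _ _ (fun _ _ => pbetti_del F sym_e vu dom k_gt0)).
have diam' := diameterP conn'.
symmetry; apply: (diagram_stable (m := diameter (@del_vertex V e u))).
- by move=> i j; apply: (pbetti_col_stable _ _ diam').
- by move=> i; apply: (pbetti_row_stable _ _ diam').
- exact: leqnn.
- exact: diameter_del sym_e vu dom conn.
Qed.
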